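(* Let $\widehat P$ be any transition model on $\mathcal{S}\times\mathcal{A}$, and let $\widetilde d_h$ be given by $\widetilde d_h(s,a)=\frac{1}{n'}\sum_{\operatorname{tr}\in\mathcal{D}'_{\mathrm{env}}}\mathbb{I}\{(s_h,a_h)=(s,a),\operatorname{tr}_h\in\mathbf{Tr}_h^{\mathcal{D}_1}\}+\frac{1}{|\mathcal{D}_1^c|}\sum_{\operatorname{tr}\in\mathcal{D}_1^c}\mathbb{I}\{(s_h,a_h)=(s,a),\operatorname{tr}_h\notin\mathbf{Tr}_h^{\mathcal{D}_1}\}$ for finite nonempty trajectory sets $\mathcal{D}'_{\mathrm{env}}$ (of size $n'$), $\mathcal{D}_1$, $\mathcal{D}_1^c$. Fix $\varepsilon>0$ and run the gradient-based optimization procedure described in the context with $\varepsilon_{\operatorname{RL}}\le\varepsilon/2$, $T\gtrsim H^2|\mathcal{S}||\mathcal{A}|/\varepsilon^2$ and $\eta^{(t)}=\sqrt{|\mathcal{S}||\mathcal{A}|/(8T)}$. Then its output $\bar\pi$ satisfies $$\sum_{h=1}^H\|d_h^{\bar\pi,\widehat P}-\widetilde d_h\|_1\le\min_{\pi\in\Pi}\sum_{h=1}^H\|d_h^{\pi,\widehat P}-\widetilde d_h\|_1+\varepsilon.$$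
   Context: Finite $\mathcal{S},\mathcal{A}$, horizon $H$, initial distribution $\rho$. Trajectories $\operatorname{tr}=(s_1,a_1,\dots,s_H,a_H)$, $\operatorname{tr}_h=(s_1,a_1,\dots,s_h,a_h)$; $\mathcal{S}_h(\mathcal{D}')$ is the set of step-$h$ states in $\mathcal{D}'$ and $\mathbf{Tr}_h^{\mathcal{D}'}=\{(s_1,a_1,\dots,s_h,a_h):s_\ell\in\mathcal{S}_\ell(\mathcal{D}')\ \forall\ell\le h\}$. $\Pi$ is the set of policies $\pi_h:\mathcal{S}\to\Delta(\mathcal{A})$; $d_h^{\pi,\widehat P}(s,a)$ is the probability that $(s_h,a_h)=(s,a)$ when running $\pi$ from $s_1\sim\rho$ with transitions $\widehat P$; $V^{\pi,\widehat P,w}=\sum_h\sum_{(s,a)}d_h^{\pi,\widehat P}(s,a)w_h(s,a)$. Procedure: $\mathcal{W}=\{w=(w_h)_{h\le H}:\|w_h\|_\infty\le1\}$, $w^{(1)}\in\mathcal{W}$; for $t=1,\dots,T$: pick $\pi^{(t)}$ with $V^{\pi^{(t)},\widehat P,w^{(t)}}\ge\max_\pi V^{\pi,\widehat P,w^{(t)}}-\varepsilon_{\operatorname{RL}}$; with $f^{(t)}(w)=\sum_h\sum_{(s,a)}w_h(s,a)(d_h^{\pi^{(t)},\widehat P}(s,a)-\widetilde d_h(s,a))$, set $w^{(t+1)}=\mathcal{P}_{\mathcal{W}}(w^{(t)}-\eta^{(t)}\nabla f^{(t)}(w^{(t)}))$, $\mathcal{P}_{\mathcal{W}}$ the Euclidean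 projection. Output $\bar\pi_h(a|s)=\bar d_h(s,a)/\sum_{a'}\bar d_h(s,a')$ where $\bar d_h=\frac1T\sum_{t}d_h^{\pi^{(t)},\widehat P}$. $a\gtrsim b$ means $a\ge Cb$ for a sufficiently large universal constant $C$. *)

From HB Require Import structures.
From mathcomp Require Import all_boot all_order all_algebra.
From mathcomp Require Import reals.
Set Implicit Arguments. Unset Strict Implicit. Unset Printing Implicit Defensive.
Import Order.TTheory GRing.Theory Num.Theory.
Local Open Scope ring_scope.

Section Defs.
Variables (R : realType) (S A : finType) (H : nat).

(* A trajectory tr = (s_1,a_1,...,s_H,a_H); steps are indexed 0..H-1. *)
Definition traj := 'I_H -> (S * A)%type.

Definition is_dist (rho : S -> R) :=
  (forall s, 0 <= rho s) /\ \sum_(s : S) rho s = 1.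

(* P s a s' = P(s' | s, a); a transition model is a distribution for each (s,a). *)
Definition is_transition (P : S -> A -> S -> R) :=
  forall s a, is_dist (P s a).

(* Markov policy: pi h s a = pi_h(a|s), a distribution over A for each step h < H. *)
Definition is_policy (pi : nat -> S -> A -> R) :=
  forall h, (h < H)%N -> forall s,
    (forall a, 0 <= pi h s a) /\ \sum_(a : A) pi h s a = 1.

(* occupancy d_h^{pi,P}(s,a) (step h, 0-based) *)
Fixpoint occ (rho : S -> R) (P : S -> A -> S -> R) (pi : nat -> S -> A -> R)
  (h : nat) : S -> A -> R :=
  match h with
  | 0 => fun s a => rho s * pi 0%N s a
  | h'.+1 => fun s' a' =>
      (\sum_(s : S) \sum_(a : A) occ rho P pi h' s a * P s a s') * pi h'.+1 s' a'
  end.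

Definition value rho P pi (w : 'I_H -> S -> A -> R) : R :=
  \sum_(h < H) \sum_(s : S) \sum_(a : A) occ rho P pi h s a * w h s a.

(* tr_h \in Tr_h^{D1}: for all l <= h, s_l is a step-l state of D1 *)
Definition prefix_in (D1 : seq traj) (h : 'I_H) (tr : traj) : bool :=
  [forall l : 'I_H, (l <= h)%N ==> has (fun tr' => (tr' l).1 == (tr l).1) D1].

Definition dtilde (Denv D1 D1c : seq traj) (h : 'I_H) (s : S) (a : A) : R :=
  (size Denv)%:R^-1 *
    \sum_(tr <- Denv) ((tr h == (s, a)) && prefix_in D1 h tr)%:R
  + (size D1c)%:R^-1 *
    \sum_(tr <- D1c) ((tr h == (s, a)) && ~~ prefix_in D1 h tr)%:R.

Definition occ_l1 rho P pi (dt : 'I_H -> S -> A -> R) : R :=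
  \sum_(h < H) \sum_(s : S) \sum_(a : A) `|occ rho P pi h s a - dt h s a|.

Definition inW (w : 'I_H -> S -> A -> R) :=
  forall h s a, `|w h s a| <= 1.

Definition sqdist (u v : 'I_H -> S -> A -> R) : R :=
  \sum_(h < H) \sum_(s : S) \sum_(a : A) (u h s a - v h s a) ^+ 2.

Definition is_projW (v u : 'I_H -> S -> A -> R) :=
  inW u /\ forall u', inW u' -> sqdist u v <= sqdist u' v.

(* gradient of the linear f^(t)(w) = sum w (d^{pi_t} - dt) *)
Definition grad_f rho P pi (dt : 'I_H -> S -> A -> R) : 'I_H -> S -> A -> R :=
  fun h s a => occ rho P pi h s a - dt h s a.

Definition dbar rho P (pis : nat -> nat -> S -> A -> R) (T : nat) (h : nat) s a : R :=
  T%:R^-1 * \sum_(1 <= t < T.+1) occ rho P (pis t) h s a.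

(* bar pi_h(a|s) = bar d_h(s,a) / sum_a' bar d_h(s,a')  (x/0 = 0 convention) *)
Definition pibar rho P pis T : nat -> S -> A -> R :=
  fun h s a => dbar rho P pis T h s a / \sum_(a' : A) dbar rho P pis T h s a'.

End Defs.

From HB Require Import structures.
From mathcomp Require Import all_boot all_order all_algebra.
From mathcomp Require Import reals.
From mathcomp Require Import ring lra.
Set Implicit Arguments. Unset Strict Implicit. Unset Printing Implicit Defensive.
Import Order.TTheory GRing.Theory Num.Theory.
Local Open Scope ring_scope.

(* The weights w^(t) are projected online gradient descent on the
   box W for the linear losses f^(t), whose gradients d^(t) - dt have squared
   norm at most 5H while W has squared diameter 4H|S||A|; the usual telescoping
   of squared distances bounds the regret against any fixed u in W by
   O(H sqrt(|S||A| T)).  Two comparisons turn this into the claim.  First, the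
   average of occupancy measures satisfies the flow equations, so it is the
   occupancy of its normalised policy: d^pibar = dbar; hence against
   u = -sgn(dbar - dt) the losses sum to -T ||dbar - dt||_1.  Second, the
   eps_RL-optimality of pi^(t) for the reward w^(t) and |w^(t)| <= 1 give
   f^(t)(w^(t)) >= -||d^pi - dt||_1 - eps_RL for every policy pi.  Dividing the
   regret bound by T yields the result for T >= 200 H^2 |S||A| / eps^2. *)

Section FiniteSums.
Variables (R : realFieldType) (I J : finType).

Lemma le_entry_sum2 (F : I -> J -> R) i j : (forall i j, 0 <= F i j) ->
  F i j <= \sum_i' \sum_j' F i' j'.
Proof.
move=> F_ge0; rewrite (pair_big predT predT F) (bigD1 (i, j)) //= lerDl.
by apply: sumr_ge0 => x _; apply: F_ge0.
Qed.

Lemma sum_indicator_pair (x : I * J) : \sum_i \sum_j (x == (i, j))%:R = 1 :> R.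
Proof.
rewrite (pair_big predT predT (fun i j => (x == (i, j))%:R)) (bigD1 x) //=.
rewrite -surjective_pairing eqxx big1 ?addr0 // => y y_neq_x.
by rewrite -surjective_pairing eq_sym (negbTE y_neq_x).
Qed.

Lemma pair_big3 (K : finType) (F : I -> J -> K -> R) :
  \sum_i \sum_j \sum_k F i j k = \sum_(x : I * (J * K)) F x.1 x.2.1 x.2.2.
Proof.
rewrite -(pair_big predT predT (fun i y => F i y.1 y.2)) /=.
by apply: eq_bigr => i _; rewrite (pair_big predT predT).
Qed.

(* When [F] sums to 0 every [F j] vanishes, and the junk value [F i / 0 = 0] is harmless. *)
Lemma mul_sum_div_ge0 (F : I -> R) i : (forall j, 0 <= F j) ->
  (\sum_j F j) * (F i / \sum_j F j) = F i.
Proof.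
move=> F_ge0; have [sum0|sum_neq0] := eqVneq (\sum_j F j) 0.
  by rewrite sum0 mul0r (psumr_eq0P (fun j _ => F_ge0 j) sum0).
by rewrite mulrC divfK.
Qed.

End FiniteSums.

Lemma ler_Nnorm_mul (R : realDomainType) (c y : R) : `|c| <= 1 -> - `|y| <= c * y.
Proof.
move=> c_le1; rewrite lerNl -mulNr; apply: le_trans (ler_norm _) _.
by rewrite normrM normrN ler_piMl.
Qed.

Lemma interval_proj_sqr_le (R : realFieldType) (p v u : R) :
  `|p| <= 1 -> `|u| <= 1 ->
  (forall y, `|y| <= 1 -> (p - v) ^+ 2 <= (y - v) ^+ 2) ->
  (p - u) ^+ 2 <= (v - u) ^+ 2.
Proof.
rewrite !ler_norml => /andP[p_ge p_le] /andP[u_ge u_le] p_min.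
have [v_le|v_gt] := lerP v 1; last first.
  by have := p_min 1; rewrite normr1 => /(_ (lexx _)); nra.
have [v_ge|v_lt] := lerP (-1) v; last first.
  by have := p_min (-1); rewrite normrN1 => /(_ (lexx _)); nra.
have := p_min v; rewrite ler_norml v_le v_ge subrr expr0n /= => /(_ isT) pv.
suff -> : p = v by [].
by apply/eqP; rewrite -subr_eq0 -sqrf_eq0 eq_le pv sqr_ge0.
Qed.

(* W is a product of intervals, so perturbing a single coordinate of [p] stays in W. *)
Lemma projW_sqr_le (R : realType) (S A : finType) (H : nat)
    (v p u : 'I_H -> S -> A -> R) : is_projW v p -> inW u ->
  forall h s a, (p h s a - u h s a) ^+ 2 <= (v h s a - u h s a) ^+ 2.
Proof.
move=> [p_in p_min] u_in h s a; apply: interval_proj_sqr_le => // y y_le1.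
pose p' h' s' a' := if (h', (s', a')) == (h, (s, a)) then y else p h' s' a'.
have p'_in : inW p' by move=> h' s' a'; rewrite /p'; case: ifP.
have := p_min p' p'_in; rewrite /sqdist !pair_big3.
rewrite (bigD1 (h, (s, a))) // [leRHS](bigD1 (h, (s, a))) //=.
have -> : \sum_(x | x != (h, (s, a))) (p' x.1 x.2.1 x.2.2 - v x.1 x.2.1 x.2.2) ^+ 2
         = \sum_(x | x != (h, (s, a))) (p x.1 x.2.1 x.2.2 - v x.1 x.2.1 x.2.2) ^+ 2.
  by apply: eq_bigr => -[h' [s' a']] /negbTE; rewrite /p' => ->.
by rewrite /p' eqxx lerD2r.
Qed.

Section OnlineGradientDescent.
Variables (R : realFieldType) (X : finType).
Variables (w g : nat -> X -> R) (u : X -> R) (eta : R) (T : nat).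

Hypothesis step_contracts : forall t, (1 <= t <= T)%N -> forall x,
  (w t.+1 x - u x) ^+ 2 <= (w t x - eta * g t x - u x) ^+ 2.

Let dist2 t := \sum_x (w t x - u x) ^+ 2.

Lemma ogd_step t : (1 <= t <= T)%N ->
  2 * eta * \sum_x (w t x - u x) * g t x
  <= dist2 t - dist2 t.+1 + eta ^+ 2 * \sum_x g t x ^+ 2.
Proof.
move=> tT; rewrite /dist2 mulr_sumr -sumrB mulr_sumr -big_split /=.
by apply: ler_sum => x _; have := step_contracts tT x; nra.
Qed.

Lemma ogd_regret :
  2 * eta * \sum_(1 <= t < T.+1) \sum_x (w t x - u x) * g t x
  <= \sum_x (w 1%N x - u x) ^+ 2
     + eta ^+ 2 * \sum_(1 <= t < T.+1) \sum_x g t x ^+ 2.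
Proof.
rewrite mulr_sumr; apply: le_trans (_ : \sum_(1 <= t < T.+1)
  (dist2 t - dist2 t.+1 + eta ^+ 2 * \sum_x g t x ^+ 2) <= _).
  by apply: ler_sum_nat => t; rewrite ltnS; apply: ogd_step.
rewrite big_split /= -mulr_sumr lerD2r.
rewrite (telescope_sumr_eq (fun t => - dist2 t)) // => [|t _]; last first.
  by rewrite opprK addrC.
rewrite opprK addrC lerBlDr lerDl.
by apply: sumr_ge0 => x _; apply: sqr_ge0.
Qed.

End OnlineGradientDescent.

Section Occupancy.
Variables (R : realType) (S A : finType) (H : nat).
Variables (rho : S -> R) (P : S -> A -> S -> R).
Hypotheses (rho_dist : is_dist rho) (P_trans : is_transition P).

Lemma occ_ge0 pi : is_policy H pi ->
  forall h, (h < H)%N -> forall s a, 0 <= occ rho P pi h s a.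
Proof.
move=> pi_pol; elim=> [|h IH] hH s a /=; apply: mulr_ge0; try exact: (pi_pol _ hH s).1.
  exact: rho_dist.1.
apply: sumr_ge0 => s0 _; apply: sumr_ge0 => a0 _.
by apply: mulr_ge0; [exact/IH/ltnW | exact: (P_trans s0 a0).1].
Qed.

Lemma occ_flow0 pi : is_policy H pi -> (0 < H)%N ->
  forall s, \sum_a occ rho P pi 0 s a = rho s.
Proof. by move=> pi_pol H_gt0 s; rewrite /= -mulr_sumr (pi_pol _ H_gt0 s).2 mulr1. Qed.

Lemma occ_flowS pi : is_policy H pi -> forall h, (h.+1 < H)%N -> forall s',
  \sum_a occ rho P pi h.+1 s' a = \sum_s \sum_a occ rho P pi h s a * P s a s'.
Proof. by move=> pi_pol h hH s'; rewrite /= -mulr_sumr (pi_pol _ hH s').2 mulr1. Qed.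

Lemma occ_sum1 pi : is_policy H pi ->
  forall h, (h < H)%N -> \sum_s \sum_a occ rho P pi h s a = 1.
Proof.
move=> pi_pol; elim=> [|h IH] hH.
  by under eq_bigr do rewrite occ_flow0 //; exact: rho_dist.2.
under eq_bigr do rewrite occ_flowS //.
rewrite exchange_big /=; under eq_bigr do rewrite exchange_big /=.
under eq_bigr do under eq_bigr do rewrite -mulr_sumr (P_trans _ _).2 mulr1.
exact/IH/ltnW.
Qed.

Lemma occ_le1 pi : is_policy H pi ->
  forall h, (h < H)%N -> forall s a, occ rho P pi h s a <= 1.
Proof.
move=> pi_pol h hH s a; rewrite -(@occ_sum1 pi pi_pol h hH).
by apply: le_entry_sum2; apply: occ_ge0.
Qed.

Lemma sum_sqr_occ_sub_le pi (d : 'I_H -> S -> A -> R) : is_policy H pi ->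
  (forall h s a, 0 <= d h s a) -> (forall h, \sum_s \sum_a d h s a <= 2) ->
  \sum_(h < H) \sum_s \sum_a (occ rho P pi h s a - d h s a) ^+ 2 <= 5 * H%:R.
Proof.
move=> pi_pol d_ge0 d_mass.
rewrite -[H in _ * H%:R]card_ord -sumr_const mulr_sumr; apply: ler_sum => h _.
apply: le_trans (_ : \sum_s \sum_a (occ rho P pi h s a + 2 * d h s a) <= _).
  apply: ler_sum => s _; apply: ler_sum => a _.
  have := occ_ge0 pi_pol (ltn_ord h) s a; have := occ_le1 pi_pol (ltn_ord h) s a.
  have := d_ge0 h s a; have := le_trans (le_entry_sum2 s a (d_ge0 h)) (d_mass h).
  nra.
under eq_bigr do rewrite big_split /= -mulr_sumr.
rewrite big_split /= -mulr_sumr (occ_sum1 pi_pol (ltn_ord h)).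
by have := d_mass h; lra.
Qed.

Lemma occ_of_flow (d : nat -> S -> A -> R) :
  (forall h s a, (h < H)%N -> 0 <= d h s a) ->
  (forall s, \sum_a d 0%N s a = rho s) ->
  (forall h, (h.+1 < H)%N -> forall s',
     \sum_a d h.+1 s' a = \sum_s \sum_a d h s a * P s a s') ->
  forall h, (h < H)%N -> forall s a,
    occ rho P (fun h s a => d h s a / \sum_a' d h s a') h s a = d h s a.
Proof.
move=> d_ge0 flow0 flowS; elim=> [|h IH] hH s a /=.
  by rewrite -flow0 mul_sum_div_ge0 // => a'; apply: d_ge0.
under eq_bigr do under eq_bigr do rewrite IH 1?ltnW //.
by rewrite -flowS // mul_sum_div_ge0 // => a'; apply: d_ge0.
Qed.

Section AverageOccupancy.
Variables (pis : nat -> nat -> S -> A -> R) (T : nat).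
Hypotheses (T_gt0 : (0 < T)%N)
  (pis_pol : forall t, (1 <= t <= T)%N -> is_policy H (pis t)).

Lemma dbar_ge0 h s a : (h < H)%N -> 0 <= dbar rho P pis T h s a.
Proof.
move=> hH; apply: mulr_ge0; first by rewrite invr_ge0 ler0n.
rewrite big_nat_cond; apply: sumr_ge0 => t /andP[tT _].
by apply: occ_ge0 => //; apply: pis_pol; rewrite -ltnS.
Qed.

Lemma dbar_flow0 : (0 < H)%N -> forall s, \sum_a dbar rho P pis T 0 s a = rho s.
Proof.
move=> H_gt0 s; rewrite /dbar -mulr_sumr exchange_big /=.
rewrite (eq_big_nat _ _ (F2 := fun=> rho s)) => [|t]; last first.
  by rewrite ltnS => tT; apply: occ_flow0 => //; apply: pis_pol.
by rewrite sumr_const_nat subn1 /= -[rho s *+ T]mulr_natl mulKf // pnatr_eq0 -lt0n.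
Qed.

Lemma dbar_flowS h : (h.+1 < H)%N -> forall s',
  \sum_a dbar rho P pis T h.+1 s' a
  = \sum_s \sum_a dbar rho P pis T h s a * P s a s'.
Proof.
move=> hH s'; rewrite /dbar -mulr_sumr exchange_big /=.
rewrite (eq_big_nat _ _ (F2 := fun t =>
  \sum_s \sum_a occ rho P (pis t) h s a * P s a s')) => [|t]; last first.
  by rewrite ltnS => tT; apply: occ_flowS => //; apply: pis_pol.
under [RHS]eq_bigr do under eq_bigr do rewrite -mulrA mulr_suml.
under [RHS]eq_bigr do rewrite -mulr_sumr.
rewrite -mulr_sumr; congr (_ * _).
by rewrite exchange_big; apply: eq_bigr => s _; rewrite exchange_big.
Qed.

Lemma occ_pibar h : (h < H)%N -> forall s a,
  occ rho P (pibar rho P pis T) h s a = dbar rho P pis T h s a.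
Proof.
move=> hH; apply: occ_of_flow => //.
- by move=> h' s a; apply: dbar_ge0.
- by apply: dbar_flow0; apply: leq_ltn_trans hH.
- exact: dbar_flowS.
Qed.

End AverageOccupancy.
End Occupancy.

Section EmpiricalOccupancy.
Variables (R : realType) (S A : finType) (H : nat).

Lemma empirical_mass_le1 (D : seq (traj S A H)) (q : pred (traj S A H)) h :
  (0 < size D)%N ->
  \sum_s \sum_a ((size D)%:R^-1 * \sum_(tr <- D) ((tr h == (s, a)) && q tr)%:R)
  <= 1 :> R.
Proof.
move=> D_gt0; under eq_bigr do rewrite -mulr_sumr; rewrite -mulr_sumr.
rewrite ler_pdivrMl ?ltr0n // mulr1.
under eq_bigr do rewrite exchange_big /=; rewrite exchange_big /=.
apply: le_trans (_ : \sum_(tr <- D) 1%:R <= _); last first.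
  by rewrite -natr_sum sum1_size.
apply: ler_sum => tr _; rewrite mulr1n.
rewrite -[leRHS](sum_indicator_pair R (tr h)); apply: ler_sum => s _; apply: ler_sum => a _.
by rewrite ler_nat; case: (tr h == (s, a)); case: (q tr).
Qed.

Lemma dtilde_ge0 (Denv D1 D1c : seq (traj S A H)) h s a :
  0 <= dtilde R Denv D1 D1c h s a.
Proof.
by apply: addr_ge0; apply: mulr_ge0; rewrite ?invr_ge0 ?ler0n //;
  apply: sumr_ge0 => tr _; rewrite ler0n.
Qed.

Lemma dtilde_mass_le2 (Denv D1 D1c : seq (traj S A H)) h :
  (0 < size Denv)%N -> (0 < size D1c)%N ->
  \sum_s \sum_a dtilde R Denv D1 D1c h s a <= 2.
Proof.
move=> Denv_gt0 D1c_gt0; under eq_bigr do rewrite big_split /=; rewrite big_split /=.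
have := empirical_mass_le1 (prefix_in D1 h) h Denv_gt0.
have := empirical_mass_le1 (fun tr => ~~ prefix_in D1 h tr) h D1c_gt0.
lra.
Qed.

End EmpiricalOccupancy.

Section GradientProcedure.
Variables (R : realType) (S A : finType) (H : nat).
Variables (rho : S -> R) (P : S -> A -> S -> R) (Denv D1 D1c : seq (traj S A H)).
Variables (epsRL eta : R) (T : nat).
Variables (pis : nat -> nat -> S -> A -> R) (w : nat -> 'I_H -> S -> A -> R).

Local Notation dt := (dtilde R Denv D1 D1c).
Local Notation g t := (grad_f rho P (pis t) dt).
Local Notation X := ('I_H * (S * A))%type.

Hypotheses (rho_dist : is_dist rho) (P_trans : is_transition P).
Hypotheses (Denv_gt0 : (0 < size Denv)%N) (D1c_gt0 : (0 < size D1c)%N).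
Hypotheses (T_gt0 : (0 < T)%N) (eta_ge0 : 0 <= eta).
Hypothesis w1_in : inW (w 1%N).
Hypothesis pis_best : forall t, (1 <= t <= T)%N ->
  is_policy H (pis t) /\
  forall pi, is_policy H pi ->
    value rho P pi (w t) <= value rho P (pis t) (w t) + epsRL.
Hypothesis w_proj : forall t, (1 <= t <= T)%N ->
  is_projW (fun h s a => w t h s a - eta * g t h s a) (w t.+1).

Let pis_pol t (tT : (1 <= t <= T)%N) := (pis_best tT).1.

Lemma iterates_inW t : (1 <= t <= T)%N -> inW (w t).
Proof. by case: t => [|[|t]] // tT; apply: (w_proj _).1; exact: ltnW. Qed.

Lemma best_response_gain pi : is_policy H pi -> forall t, (1 <= t <= T)%N ->
  - occ_l1 rho P pi dt - epsRL
  <= \sum_(x : X) w t x.1 x.2.1 x.2.2 * g t x.1 x.2.1 x.2.2.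
Proof.
move=> pi_pol t tT; have := (pis_best tT).2 pi pi_pol.
rewrite /value /occ_l1 !pair_big3 => pi_le.
have w_dt_split q : \sum_(x : X) w t x.1 x.2.1 x.2.2 * grad_f rho P q dt x.1 x.2.1 x.2.2
    = \sum_(x : X) occ rho P q x.1 x.2.1 x.2.2 * w t x.1 x.2.1 x.2.2
      - \sum_(x : X) w t x.1 x.2.1 x.2.2 * dt x.1 x.2.1 x.2.2.
  by rewrite -sumrB; apply: eq_bigr => x _; rewrite /grad_f mulrBr mulrC.
have pi_gain : - \sum_(x : X) `|occ rho P pi x.1 x.2.1 x.2.2 - dt x.1 x.2.1 x.2.2|
    <= \sum_(x : X) w t x.1 x.2.1 x.2.2 * grad_f rho P pi dt x.1 x.2.1 x.2.2.
  rewrite -sumrN; apply: ler_sum => x _; apply: ler_Nnorm_mul.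
  exact: iterates_inW.
have := w_dt_split pi; have := w_dt_split (pis t); lra.
Qed.

Local Notation db := (dbar rho P pis T).

Definition sign_comparator : 'I_H -> S -> A -> R :=
  fun h s a => - Num.sg (db h s a - dt h s a).

Lemma sign_comparator_inW : inW sign_comparator.
Proof. by move=> h s a; rewrite normrN normr_sg lern1 leq_b1. Qed.

Lemma sign_comparator_gain :
  \sum_(1 <= t < T.+1) \sum_(x : X) sign_comparator x.1 x.2.1 x.2.2 * g t x.1 x.2.1 x.2.2
  = - (T%:R * occ_l1 rho P (pibar rho P pis T) dt).
Proof.
rewrite exchange_big /= /occ_l1 pair_big3 mulr_sumr -sumrN.
apply: eq_bigr => -[h [s a]] _ /=; rewrite -mulr_sumr sumrB sumr_const_nat subn1.
have -> : \sum_(1 <= t < T.+1) occ rho P (pis t) h s a = T%:R * db h s a.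
  by rewrite /dbar mulVKf // pnatr_eq0 -lt0n.
rewrite (occ_pibar rho_dist P_trans T_gt0 pis_pol (ltn_ord h)) normrEsg.
by rewrite /sign_comparator -[dt h s a *+ T]mulr_natl; ring.
Qed.

Lemma iterates_regret :
  2 * eta * \sum_(1 <= t < T.+1) \sum_(x : X)
    (w t x.1 x.2.1 x.2.2 - sign_comparator x.1 x.2.1 x.2.2) * g t x.1 x.2.1 x.2.2
  <= 4 * (H * (#|S| * #|A|))%:R + eta ^+ 2 * (T%:R * (5 * H%:R)).
Proof.
pose flat (F : 'I_H -> S -> A -> R) (x : X) := F x.1 x.2.1 x.2.2.
apply: le_trans (ogd_regret (w := fun t => flat (w t)) (g := fun t => flat (g t))
  (u := flat sign_comparator) _) _.
  by move=> t tT x; apply: projW_sqr_le (w_proj tT) sign_comparator_inW _ _ _.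
apply: lerD.
  have -> : 4 * (H * (#|S| * #|A|))%:R = \sum_(x : X) 4 :> R.
    by rewrite sumr_const !card_prod card_ord mulr_natr.
  apply: ler_sum => x _; rewrite /flat.
  have := w1_in x.1 x.2.1 x.2.2.
  have := sign_comparator_inW x.1 x.2.1 x.2.2.
  rewrite !ler_norml => /andP[? ?] /andP[? ?]; nra.
rewrite ler_wpM2l ?sqr_ge0 // mulr_natl -[T in _ *+ T](subn1 T.+1) -sumr_const_nat.
apply: ler_sum_nat => t; rewrite ltnS => tT.
rewrite /flat -(pair_big3 (fun h s a => g t h s a ^+ 2)).
exact (sum_sqr_occ_sub_le rho_dist P_trans (pis_pol tT) (dtilde_ge0 R Denv D1 D1c)
  (fun h => dtilde_mass_le2 R D1 h Denv_gt0 D1c_gt0)).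
Qed.

Lemma pibar_l1_regret pi : is_policy H pi ->
  2 * eta * T%:R *
    (occ_l1 rho P (pibar rho P pis T) dt - occ_l1 rho P pi dt - epsRL)
  <= 4 * (H * (#|S| * #|A|))%:R + eta ^+ 2 * (T%:R * (5 * H%:R)).
Proof.
move=> pi_pol; apply: le_trans iterates_regret; rewrite -mulrA ler_wpM2l ?mulr_ge0 //.
under eq_bigr do under eq_bigr do rewrite mulrBl.
under eq_bigr do rewrite sumrB; rewrite sumrB sign_comparator_gain opprK.
have : \sum_(1 <= t < T.+1) (- occ_l1 rho P pi dt - epsRL)
    <= \sum_(1 <= t < T.+1) \sum_(x : X) w t x.1 x.2.1 x.2.2 * g t x.1 x.2.1 x.2.2.
  by apply: ler_sum_nat => t; rewrite ltnS; apply: best_response_gain.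
rewrite sumr_const_nat subn1 -mulr_natl; lra.
Qed.

End GradientProcedure.

(* With K = 8 T eta^2 the left-hand side is 37 H T eta^2, and the hypothesis on T
   forces 37 H eta <= eps. *)
Lemma step_size_tradeoff (R : realFieldType) (H K T eta eps : R) :
  0 <= H -> 0 < T -> 0 < eta -> 0 < eps -> eta ^+ 2 * (8 * T) = K ->
  200 * H ^+ 2 * K <= T * eps ^+ 2 ->
  4 * H * K + eta ^+ 2 * (T * (5 * H)) <= eta * T * eps.
Proof.
move=> H_ge0 T_gt0 eta_gt0 eps_gt0 <- T_large.
have H_eta_sqr : (37 * H * eta) ^+ 2 <= eps ^+ 2 by nra.
have H_eta : 37 * H * eta <= eps by nra.
have : 0 <= eta * T * (eps - 37 * H * eta).
  by apply: mulr_ge0; [apply: mulr_ge0 |]; lra.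
by rewrite (_ : _ + _ = eta * T * (37 * H * eta)); [lra | ring].
Qed.

Lemma sqrt_step_size (R : realType) (K T : nat) : (0 < K)%N -> (0 < T)%N ->
  let eta : R := Num.sqrt (K%:R / (8 * T)%:R) in
  0 < eta /\ eta ^+ 2 * (8 * T%:R) = K%:R.
Proof.
move=> K_gt0 T_gt0 eta; split; first by rewrite sqrtr_gt0 divr_gt0 // ltr0n // muln_gt0.
rewrite sqr_sqrtr ?divr_ge0 // [(8 * T)%:R]natrM divfK //.
by rewrite mulf_neq0 // pnatr_eq0 -lt0n.
Qed.

Lemma occ_l1_eq0 (R : realType) (S A : finType) (H : nat)
    rho P pi (d : 'I_H -> S -> A -> R) :
  (H * (#|S| * #|A|) = 0)%N -> occ_l1 rho P pi d = 0.
Proof.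
rewrite -[H in (H * _)%N]card_ord -!card_prod => /card0_eq X0.
by rewrite /occ_l1 pair_big3 big1 // => x; have := X0 x; rewrite inE.
Qed.

Theorem lemma5 :
  exists C : nat,
  forall (R : realType) (S A : finType) (H : nat)
    (rho : S -> R) (P : S -> A -> S -> R)
    (Denv D1 D1c : seq (traj S A H))
    (eps epsRL : R) (T : nat)
    (pis : nat -> nat -> S -> A -> R)
    (w : nat -> 'I_H -> S -> A -> R),
  is_dist rho -> is_transition P ->
  (0 < size Denv)%N -> (0 < size D1)%N -> (0 < size D1c)%N ->
  0 < eps -> epsRL <= eps / 2 ->
  (C * H ^ 2 * #|S| * #|A|)%:R / eps ^+ 2 <= T%:R ->
  let dt := @dtilde R S A H Denv D1 D1c in
  let eta := Num.sqrt ((#|S| * #|A|)%:R / (8 * T)%:R) : R in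
  inW (w 1%N) ->
  (forall t, (1 <= t <= T)%N ->
     is_policy H (pis t) /\
     forall pi, is_policy H pi ->
       value rho P pi (w t) <= value rho P (pis t) (w t) + epsRL) ->
  (forall t, (1 <= t <= T)%N ->
     is_projW (fun h s a => w t h s a - eta * grad_f rho P (pis t) dt h s a)
              (w t.+1)) ->
  forall pi, is_policy H pi ->
    occ_l1 rho P (pibar rho P pis T) dt <= occ_l1 rho P pi dt + eps.
Proof.
exists 200%N => R S A H rho P Denv D1 D1c eps epsRL T pis w rho_dist P_trans
  Denv_gt0 _ D1c_gt0 eps_gt0 epsRL_le T_large dt eta w1_in pis_best w_proj pi pi_pol.
have [HK0|HK_gt0] := posnP (H * (#|S| * #|A|))%N.
  by rewrite !occ_l1_eq0 // add0r ltW.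
have [H_gt0 K_gt0] : (0 < H)%N /\ (0 < #|S| * #|A|)%N by apply/andP; rewrite -muln_gt0.
have {}T_large : 200 * H%:R ^+ 2 * (#|S| * #|A|)%:R <= T%:R * eps ^+ 2.
  rewrite -ler_pdivrMr ?exprn_gt0 //; apply: le_trans T_large.
  by rewrite !natrM expr2 !mulrA.
have T_gt0 : (0 < T)%N.
  rewrite lt0n; apply: contraTneq T_large => ->; rewrite mul0r -ltNge.
  by rewrite !mulr_gt0 ?exprn_gt0 ?ltr0n.
have [eta_gt0 eta_sqr] := sqrt_step_size R K_gt0 T_gt0.
rewrite -/eta in eta_gt0 eta_sqr.
have := pibar_l1_regret rho_dist P_trans Denv_gt0 D1c_gt0 T_gt0 (ltW eta_gt0)
  w1_in pis_best w_proj pi_pol.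
have T_pos : (0 : R) < T%:R by rewrite ltr0n.
have := step_size_tradeoff (ler0n R H) T_pos eta_gt0 eps_gt0 eta_sqr T_large.
set Lbar := occ_l1 rho P (pibar rho P pis T) dt; set Lpi := occ_l1 rho P pi dt.
move=> tradeoff regret.
have etaT_gt0 : 0 < eta * T%:R by rewrite mulr_gt0.
suff : eta * T%:R * (2 * (Lbar - Lpi - epsRL)) <= eta * T%:R * eps.
  by rewrite ler_pM2l //; lra.
lra.
Qed.
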